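(* Any quantum oracle algorithm that solves $\mathsf{LCS\text{-}RLE}$ with probability at least $2/3$ requires $\tilde\Omega(n)$ queries, where $n$ is the encoded length of the inputs.
   Context: A string $\tilde s$ has run-length encoding (RLE) $s=s[1]\cdots s[m]$, its sequence of maximal runs of identical characters, each run having character $C(s[i])$ and length $R(s[i])$; $|s|=m$ is the encoded length. An RLE string $t$ is a generalized substring of $s$ if $\tilde t$ is a substring of $\tilde s$. The problem $\mathsf{LCS\text{-}RLE}$: given quantum oracle access to two RLE strings $A$ and $B$ only through the unitaries $|i\rangle|c\rangle|r\rangle\mapsto|i\rangle|c\oplus C(S[i])\rangle|r\oplus R(S[i])\rangle$ for $S\in\{A,B\}$ (no prefix-sum oracle), find a longest common generalized substring $s$ of $A$ and $B$ (i.e. $\tilde s$ is a longest common substring of $\tilde A$ and $\tilde B$) and output a triple $(i_A,i_B,\ell)$ with $\ell=|s|$, where an occurrence of $\tilde s$ in $\tilde A$ starts within the run $A[i_A]$ and one in $\tilde B$ starts within the run $B[i_B]$. $\tilde\Omega(\cdot)$ hides polylogarithmic factors. *)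

From mathcomp Require Import all_boot all_order all_algebra.
From mathcomp Require Import complex.
From mathcomp Require Import Rstruct.

Set Implicit Arguments.
Unset Strict Implicit.
Unset Printing Implicit Defensive.

Import Order.TTheory GRing.Theory Num.Theory.

Definition Cx : Type := (Rdefinitions.R)[i].

Definition word (b : nat) : finType := {ffun 'I_b -> bool}.
Definition word0 (b : nat) : word b := [ffun => false].
Definition xorw (b : nat) (u v : word b) : word b := [ffun j => u j (+) v j].
Definition bits_of (b r : nat) : word b := [ffun j : 'I_b => odd (r %/ 2 ^ j)].

(* RLE strings: a run is (character, length); characters are b-bit words *)
Definition run (b : nat) := (word b * nat)%type.

(* a valid RLE string of encoded length n whose characters and run lengths
   fit in b-bit registers: positive lengths < 2^b, maximal runs
   (consecutive runs have distinct characters) *)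
Definition valid_rle (n b : nat) (s : seq (run b)) : Prop :=
  [/\ size s = n,
      all (fun r : run b => (0 < r.2 < 2 ^ b)%N) s
    & sorted (fun x y : run b => x.1 != y.1) s].

Definition expand (b : nat) (s : seq (run b)) : seq (word b) :=
  flatten [seq nseq r.2 r.1 | r <- s].

(* number of maximal runs of an (expanded) string = its encoded length *)
Fixpoint nruns (T : eqType) (u : seq T) : nat :=
  match u with
  | [::] => 0
  | [:: _] => 1
  | x :: ((y :: _) as u') => ((x != y) + nruns u')%N
  end.

Definition is_LCS (b : nat) (A B : seq (run b)) (u : seq (word b)) : Prop :=
  [/\ infix u (expand A), infix u (expand B)
    & forall v, infix v (expand A) -> infix v (expand B) -> (size v <= size u)%N].

Definition run_start (b : nat) (s : seq (run b)) (i : nat) : nat :=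
  sumn [seq r.2 | r <- take i s].

Definition occ_in_run (b : nat) (s : seq (run b)) (u : seq (word b)) (i : nat) : Prop :=
  exists p, [/\ take (size u) (drop p (expand s)) = u,
                (run_start s i <= p)%N & (p < run_start s i.+1)%N].

(* (iA, iB, l) is a correct answer of LCS-RLE on (A, B) (runs indexed from 0) *)
Definition valid_output (b : nat) (A B : seq (run b)) (o : nat * nat * nat) : Prop :=
  exists u, [/\ is_LCS A B u, o.2 = nruns u, occ_in_run A u o.1.1
              & occ_in_run B u o.1.2].

(* basis states: |s, i, c, r, w> with s selecting the oracle (A or B),
   i the run index, c and r the b-bit answer registers, w the workspace *)
Definition qspace (n b m : nat) : finType :=
  (bool * 'I_n * word b * word b * 'I_m)%type.

Definition op (X : finType) := X -> X -> Cx.    (* matrix entries <x|U|y> *)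
Definition qstate (X : finType) := X -> Cx.

Local Open Scope ring_scope.

Definition apply_op (X : finType) (U : op X) (v : qstate X) : qstate X :=
  fun x => \sum_(y : X) U x y * v y.

Definition basis (X : finType) (x0 : X) : qstate X := fun x => (x == x0)%:R.

Definition unitary (X : finType) (U : op X) : Prop :=
  forall x y : X, \sum_(z : X) (U z x)^* * U z y = (x == y)%:R.

Definition oracle_map (n b m : nat) (A B : seq (run b)) (x : qspace n b m)
  : qspace n b m :=
  let: (s, i, c, r, w) := x in
  let e := nth (word0 b, 0%N) (if s then B else A) i in
  (s, i, xorw c e.1, xorw r (bits_of b e.2), w).

Definition oracle (n b m : nat) (A B : seq (run b)) : op (qspace n b m) :=
  fun x y => (x == oracle_map A B y)%:R.

Fixpoint final_state (X : finType) (U : nat -> op X) (O : op X) (x0 : X) (T : nat)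
  : qstate X :=
  match T with
  | 0 => apply_op (U 0%N) (basis x0)
  | T'.+1 => apply_op (U T) (apply_op O (final_state U O x0 T'))
  end.

Definition succeeds (n b m T : nat) (U : nat -> op (qspace n b m))
  (x0 : qspace n b m) (out : qspace n b m -> nat * nat * nat)
  (A B : seq (run b)) : Prop :=
  let st := final_state U (oracle A B) x0 T in
  exists P : pred (qspace n b m),
    (forall x, P x -> valid_output A B (out x)) /\
    (2%:R / 3%:R : Cx) <= \sum_(x | P x) `|st x| ^+ 2.

(* For x in {0,1}^N and k = (N - 1) / 2 let X_x be the RLE string whose N runs
   alternate between two letters and have lengths 2 + 2 x_i, and put
   A_x = X_x c d^M and B_x = X_x e d^M with M = 2N + 2k + 1.  A common substring of
   A_x and B_x lies inside X_x or inside d^M, so a longest one starts in the d-run of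
   A_x iff |x| <= k: solving LCS-RLE decides the threshold function |x| > k.
   Flipping x_j changes only run j, so by the hybrid argument the overlap of the
   final states on x and on x with x_j flipped is at least 1 minus the query mass
   both computations put on run j, while correctness on both inputs forces the
   overlap below 19/20.  Every vertex of weight k or k + 1 has at least k + 1
   crossing edges and spends query mass at most T in total, hence k + 1 <= 40 T,
   i.e. n <= 82 T. *)

From mathcomp Require Import all_boot all_order all_algebra.
From mathcomp Require Import complex Rstruct.
From mathcomp Require Import ring lra zify.
Import Order.TTheory GRing.Theory Num.Theory.

Set Implicit Arguments.
Unset Strict Implicit.
Unset Printing Implicit Defensive.

Lemma bits_of_inj b r s :
  r < 2 ^ b -> s < 2 ^ b -> bits_of b r = bits_of b s -> r = s.
Proof.
elim: b r s => [|b IH] r s; first by rewrite expn0 !ltnS !leqn0 => /eqP -> /eqP ->.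
move=> r_lt s_lt /ffunP rs.
have bit (j : nat) : j < b.+1 -> odd (r %/ 2 ^ j) = odd (s %/ 2 ^ j).
  by move=> lt_j; have := rs (Ordinal lt_j); rewrite !ffunE.
have half_lt m : m < 2 ^ b.+1 -> m./2 < 2 ^ b by rewrite -divn2 ltn_divLR // -expnSr.
have halves : r./2 = s./2.
  apply: IH; rewrite ?half_lt //; apply/ffunP => j.
  by rewrite !ffunE -!divn2 -!divnMA -expnS; apply: bit j.+1 (ltn_ord j).
have := bit 0 isT; rewrite expn0 !divn1 => odds.
by rewrite -[r]odd_double_half -[s]odd_double_half odds halves.
Qed.

Lemma expn_lt_trunc_log n e : 0 < e -> n ^ e < 2 ^ (e * (trunc_log 2 n).+1).
Proof. by move=> e_gt0; rewrite mulnC expnM ltn_exp2r // trunc_log_ltn. Qed.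

Section Infix.
Variable T : eqType.
Implicit Types u s p q : seq T.

Lemma prefix_cat_notin u p (c : T) q :
  prefix u (p ++ c :: q) -> c \notin u -> prefix u p.
Proof.
elim: p u => [|a p IH] [|y u] //=; first by move=> /andP[/eqP -> _]; rewrite inE eqxx.
move=> /andP[/eqP -> pre]; rewrite inE negb_or => /andP[_ cu].
by rewrite eqxx /= IH.
Qed.

Lemma infix_cat_notin u p (c : T) q :
  infix u (p ++ c :: q) -> c \notin u -> infix u p || infix u q.
Proof.
elim: p => [|a p IH]; rewrite ?cat_cons infix_consl.
  move=> /orP[pre|->] cu; last by rewrite orbT.
  by move: (prefix_cat_notin (p := [::]) pre cu); rewrite prefixs0 => /eqP ->.
move=> /orP[pre|inf] cu.
  by rewrite (prefixW (prefix_cat_notin (p := a :: p) pre cu)).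
by case/orP: (IH inf cu) => [inf'|->]; rewrite ?orbT // infix_consl inf' orbT.
Qed.

Lemma take_drop_nth0 (x0 : T) u s (p : nat) :
  take (size u) (drop p s) = u -> u != [::] -> p < size s /\ nth x0 s p = nth x0 u 0.
Proof.
move=> occ u0; have lt_p_s : p < size s.
  by rewrite ltnNge; apply/negP => le_s_p; move: occ u0; rewrite drop_oversize // => <-.
by split => //; rewrite -occ nth_take ?lt0n ?size_eq0 // nth_drop addn0.
Qed.

End Infix.

Section RunStart.
Variable b : nat.
Implicit Types s : seq (run b).

Lemma size_expand s : size (expand s) = sumn [seq r.2 | r <- s].
Proof.
rewrite /expand size_flatten /shape -map_comp; congr sumn.
by apply: eq_map => r /=; rewrite size_nseq.
Qed.

Lemma run_start_cat s1 s2 i :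
  run_start (s1 ++ s2) (size s1 + i) = size (expand s1) + run_start s2 i.
Proof.
by rewrite /run_start take_cat ltnNge leq_addr /= addKn map_cat sumn_cat size_expand.
Qed.

Lemma leq_run_start s i j : i <= j -> run_start s i <= run_start s j.
Proof.
move=> le_ij; rewrite /run_start -[take j s](cat_take_drop i) take_takel //.
by rewrite map_cat sumn_cat leq_addr.
Qed.

Lemma run_start_oversize s i : size s <= i -> run_start s i.+1 = run_start s i.
Proof. by move=> le_s_i; rewrite /run_start !take_oversize // (leq_trans le_s_i). Qed.

End RunStart.

Section Threshold.
Variables N k : nat.
Local Notation cube := {ffun 'I_N -> bool}.
Implicit Types (x : cube) (j : 'I_N).

Definition weight x : nat := \sum_i x i.
Definition flip x j : cube := [ffun i => if i == j then ~~ x i else x i].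
Definition crosses x j := (k < weight x) != (k < weight (flip x j)).
Definition on_threshold x := (weight x == k) || (weight x == k.+1).

Lemma flipK j : involutive (flip ^~ j).
Proof. by move=> x; apply/ffunP => i; rewrite !ffunE; case: eqP; rewrite ?negbK. Qed.

Lemma weightE x j : weight x = x j + \sum_(i | i != j) x i.
Proof. by rewrite /weight (bigD1 j). Qed.

Lemma weight_flip x j : weight (flip x j) = ~~ x j + \sum_(i | i != j) x i.
Proof.
rewrite /weight (bigD1 j) //= ffunE eqxx; congr (_ + _).
by apply: eq_bigr => i /negbTE ji; rewrite ffunE ji.
Qed.

Lemma crossesE x j : crosses x j = if x j then weight x == k.+1 else weight x == k.
Proof.
rewrite /crosses (weightE x j) weight_flip.
by case: (x j) => /=; apply/idP/idP; lia.
Qed.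

Lemma crosses_flip x j : crosses (flip x j) j = crosses x j.
Proof. by rewrite /crosses flipK eq_sym. Qed.

Lemma crosses_on_threshold x j : crosses x j -> on_threshold x.
Proof. by rewrite crossesE /on_threshold; case: (x j) => ->; rewrite ?orbT. Qed.

Lemma weight_card x : weight x = #|[pred j | x j]|.
Proof.
rewrite /weight -sum1_card [RHS]big_mkcond.
by apply: eq_bigr => j _; rewrite inE; case: (x j).
Qed.

Lemma card_crosses x :
  2 * k < N -> on_threshold x -> k < #|[pred j | crosses x j]|.
Proof.
move=> two_k_lt_N /orP[/eqP wx | /eqP wx].
  have crossesC : [pred j | crosses x j] =i [pred j | ~~ x j].
    by move=> j; rewrite !inE crossesE wx; case: (x j); rewrite ?eqxx //=; lia.
  have notxC : [predC [pred j | x j]] =i [pred j | ~~ x j] by move=> j; rewrite !inE.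
  have := cardC [pred j | x j]; rewrite card_ord (eq_card crossesC) (eq_card notxC).
  by rewrite -weight_card wx; lia.
have crossesT : [pred j | crosses x j] =i [pred j | x j].
  by move=> j; rewrite !inE crossesE wx; case: (x j); rewrite ?eqxx //=; lia.
by rewrite (eq_card crossesT) -weight_card wx.
Qed.

Lemma exists_on_threshold : k <= N -> exists x, on_threshold x.
Proof.
move=> le_k_N; pose x : cube := [ffun i : 'I_N => i < k].
suff wx : weight x = k by exists x; rewrite /on_threshold wx eqxx.
rewrite /weight (eq_bigr (fun i : 'I_N => if i < k then 1 else 0)).
  by rewrite -big_mkcond -(big_ord_widen N (fun _ => 1) le_k_N) sum1_card card_ord.
by move=> i _; rewrite ffunE; case: (i < k).
Qed.

Local Open Scope ring_scope.

Lemma sum_crosses_flip (V : nmodType) (G : cube -> 'I_N -> V) :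
  \sum_x \sum_(j | crosses x j) G (flip x j) j = \sum_x \sum_(j | crosses x j) G x j.
Proof.
rewrite (exchange_big_dep xpredT) // [RHS](exchange_big_dep xpredT) //=.
apply: eq_bigr => j _; rewrite (reindex_inj (can_inj (flipK j))).
by apply: eq_big => [x|x _]; rewrite ?crosses_flip ?flipK.
Qed.

Lemma threshold_query_bound (F : realFieldType) (T : nat) (eps : F)
    (q : cube -> 'I_N -> nat -> F) :
  (2 * k < N)%N -> 0 <= eps ->
  (forall x j t, 0 <= q x j t) ->
  (forall x t, (t < T)%N -> \sum_j q x j t <= 1) ->
  (forall x j, crosses x j -> eps <= \sum_(t < T) (q x j t + q (flip x j) j t)) ->
  k.+1%:R * eps <= 2 * T%:R.
Proof.
move=> two_k_lt_N eps_ge0 q_ge0 q_le1 q_crosses.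
pose G x j := \sum_(t < T) q x j t.
pose S := \sum_x \sum_(j | crosses x j) G x j.
pose B := \sum_x ((on_threshold x)%:R : F).
have B_ge1 : 1 <= B.
  have [|x thr] := @exists_on_threshold; first by lia.
  rewrite /B (bigD1 x) //= thr lerDl; apply: sumr_ge0 => y _; apply: ler0n.
have count_x x : (on_threshold x)%:R * (k.+1%:R * eps) <= \sum_(j | crosses x j) eps.
  case thr: (on_threshold x); last by rewrite mul0r sumr_ge0.
  rewrite /= mulr1n mul1r sumr_const -[X in _ <= X]mulr_natl ler_wpM2r // ler_nat.
  by rewrite (eq_card (B := [pred j | crosses x j])) //; apply: card_crosses.
have mass_x x : \sum_(j | crosses x j) G x j <= (on_threshold x)%:R * T%:R.
  case thr: (on_threshold x); last first.
    rewrite big_pred0 ?mul0r // => j; apply: contraNF (negbT thr).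
    exact: crosses_on_threshold.
  apply: le_trans (_ : \sum_j G x j <= _).
    rewrite [X in _ <= X](bigID (crosses x)) /= lerDl.
    by apply: sumr_ge0 => j _; apply: sumr_ge0.
  rewrite /= mulr1n mul1r /G exchange_big /=.
  apply: le_trans (_ : _ <= \sum_(t < T) (1 : F)) _; last by rewrite sumr_const card_ord.
  by apply: ler_sum => t _; apply: q_le1.
have : B * (k.+1%:R * eps) <= B * (2 * T%:R).
  rewrite mulr_suml mulrCA mulr_suml.
  apply: le_trans (ler_sum _ (fun x _ => count_x x)) _.
  apply: le_trans (_ : _ <= 2 * S) _.
    rewrite mulr_natl mulr2n {2}/S -(sum_crosses_flip G) /S -big_split /=.
    apply: ler_sum => x _; rewrite -big_split /=; apply: ler_sum => j cx.
    by rewrite /G -big_split /=; apply: q_crosses.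
  by rewrite ler_wpM2l // /S; apply: ler_sum => x _; apply: mass_x.
by rewrite ler_pM2l // (lt_le_trans ltr01 B_ge1).
Qed.

End Threshold.

Section HardInstances.
Variables b N' k : nat.
Local Notation N := N'.+1.
Local Notation M := (2 * N + 2 * k + 1).
Implicit Types (x : {ffun 'I_N -> bool}) (c : word b).

Definition letter i : word b := bits_of b i.
Local Notation pad := (letter 4).

Definition encoding x : seq (run b) :=
  mkseq (fun i => (letter (odd i).+1, 2 + 2 * x (inord i))) N.
Definition instance c x : seq (run b) := encoding x ++ [:: (c, 1); (pad, M)].
Definition body x := expand (encoding x).

Lemma expand_instance c x : expand (instance c x) = body x ++ c :: nseq M pad.
Proof. by rewrite /expand /instance map_cat flatten_cat /= cats0. Qed.

Lemma size_instance c x : size (instance c x) = N.+2.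
Proof. by rewrite size_cat size_mkseq addn2. Qed.

Lemma size_body x : size (body x) = 2 * N + 2 * weight x.
Proof.
rewrite /body size_expand /encoding /mkseq -map_comp sumnE big_map -val_enum_ord.
rewrite big_map big_enum /= big_split /= sum_nat_const card_ord mulnC -big_distrr /=.
by congr (_ + 2 * _); apply: eq_bigr => i _; rewrite inord_val.
Qed.

Lemma mem_body x z : z \in body x -> (z == letter 1) || (z == letter 2).
Proof.
move=> /flattenP [_ /mapP [r /mapP [i _ ->] ->]]; rewrite mem_nseq => /andP[_ /eqP ->].
by case: (odd i); rewrite eqxx ?orbT.
Qed.

Lemma nth_instance c x d i : nth d (instance c x) i =
  if i < N then (letter (odd i).+1, 2 + 2 * x (inord i))
  else if i == N then (c, 1) else if i == N.+1 then (pad, M) else d.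
Proof.
rewrite nth_cat size_mkseq; case: ltnP => [lt_i_N|le_N_i]; first by rewrite nth_mkseq.
have [l ->] : exists l, i = N + l by exists (i - N); lia.
rewrite addKn; case: l => [|[|l]] /=; rewrite ?addn0 ?eqxx //.
  by rewrite [N + 1]addn1 gtn_eqF // eqxx.
by rewrite nth_nil !gtn_eqF //; lia.
Qed.

Lemma nth_instance_flip c x (j : 'I_N) d (i : nat) : i != j ->
  nth d (instance c (flip x j)) i = nth d (instance c x) i.
Proof.
move=> ij; rewrite !nth_instance; case: ltnP => // lt_i_N.
rewrite ffunE; case: eqP => // ij'.
by move: ij; rewrite -ij' inordK // eqxx.
Qed.

Lemma run_start_pad_run c x : run_start (instance c x) N.+1 = (size (body x)).+1.
Proof.
have -> : N.+1 = size (encoding x) + 1 by rewrite size_mkseq addn1.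
by rewrite run_start_cat /run_start /= addn0 addn1.
Qed.

Lemma pad_runE c x i p :
  run_start (instance c x) i <= p -> p < run_start (instance c x) i.+1 ->
  (i == N.+1) = (size (body x) < p).
Proof.
move=> ge_p lt_p; have := run_start_pad_run c x.
case: (ltngtP i N.+1) => [lt_i|gt_i|eq_i]; last by move: ge_p; rewrite eq_i; lia.
  by have := leq_run_start (instance c x) lt_i; lia.
by move: lt_p; rewrite run_start_oversize ?size_instance //; lia.
Qed.

Hypothesis b_gt2 : 2 < b.

Let pow8 : 2 ^ 3 <= 2 ^ b. Proof. by rewrite leq_exp2l. Qed.

Lemma letter_eq i j : i < 8 -> j < 8 -> (letter i == letter j) = (i == j).
Proof.
have lt8 l : l < 8 -> l < 2 ^ b by move=> lt_l; apply: leq_trans lt_l pow8.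
by move=> /lt8 lt_i /lt8 lt_j; apply/eqP/eqP => [/(bits_of_inj lt_i lt_j)|->].
Qed.

Lemma pad_notin_body x : pad \notin body x.
Proof. by apply/negP => /mem_body; rewrite !letter_eq. Qed.

Lemma nth_expand_instance_pad c x p : c != pad -> p < size (expand (instance c x)) ->
  (nth pad (expand (instance c x)) p == pad) = (size (body x) < p).
Proof.
move=> c_pad; rewrite expand_instance nth_cat size_cat [size (_ :: _)]/= size_nseq.
move=> lt_p.
case: ltnP => [lt_p_body|le_body_p].
  rewrite ltnNge (ltnW lt_p_body) /=.
  by apply/negbTE/(contraNneq _ (pad_notin_body x)) => <-; rewrite mem_nth.
case: (p - size (body x)) (subnKC le_body_p) => [|l] p_eq.
  by rewrite (negbTE c_pad) -p_eq addn0 ltnn.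
by rewrite -p_eq -[nth _ _ l.+1]/(nth pad (nseq M pad) l) nth_nseq if_same eqxx; lia.
Qed.

Lemma common_infix_instances x u :
  infix u (expand (instance (letter 3) x)) -> infix u (expand (instance (letter 5) x)) ->
  infix u (body x) || infix u (nseq M pad).
Proof.
rewrite !expand_instance => uA uB; apply: (infix_cat_notin uA).
apply/negP => /(mem_infix uB); rewrite mem_cat => /orP[/mem_body|].
  by rewrite !letter_eq.
by rewrite in_cons mem_nseq => /orP[|/andP[_]]; rewrite letter_eq.
Qed.

Lemma valid_output_threshold x o :
  valid_output (instance (letter 3) x) (instance (letter 5) x) o ->
  (o.1.1 == N.+1) = (weight x <= k).
Proof.
move=> [u [[uA uB u_max] _ [p [occ ge_p lt_p]] _]].
have common_body c : infix (body x) (expand (instance c x)).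
  by rewrite expand_instance prefix_infix.
have common_pad c : infix (nseq M pad) (expand (instance c x)).
  by rewrite expand_instance -cat_rcons suffix_infix.
have := u_max _ (common_body _) (common_body _); rewrite size_body => ge_body.
have := u_max _ (common_pad _) (common_pad _); rewrite size_nseq => ge_M.
have u_nil : u != [::] by rewrite -size_eq0 -lt0n (leq_trans _ ge_M) // addn1.
have [lt_p_size head_u] := take_drop_nth0 pad occ u_nil.
have pad3 : letter 3 != pad by rewrite letter_eq.
rewrite (pad_runE ge_p lt_p) -(nth_expand_instance_pad pad3 lt_p_size) head_u.
have u0 : nth pad u 0 \in u by rewrite mem_nth // lt0n size_eq0.
case/orP: (common_infix_instances uA uB) => [u_body | u_pad].
  have := leq_trans ge_M (size_infix u_body); rewrite size_body => heavy.
  rewrite leqNgt (_ : k < weight x) /=; last by lia.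
  by apply/negbTE/(contraNneq _ (pad_notin_body x)) => <-; apply: mem_infix u_body _ u0.
have := leq_trans ge_body (size_infix u_pad); rewrite size_nseq => light.
rewrite (_ : weight x <= k); last by lia.
by have := mem_infix u_pad u0; rewrite mem_nseq => /andP[_ ->].
Qed.

Hypothesis M_lt : M < 2 ^ b.

Lemma instance_valid i x : i \in [:: 3; 5] -> @valid_rle N.+2 b (instance (letter i) x).
Proof.
move=> i35.
have [ne1 ne2 ne4] : [/\ letter 1 != letter i, letter 2 != letter i & pad != letter i].
  by move: i35; rewrite !inE => /orP[] /eqP ->; rewrite !letter_eq.
split; first exact: size_instance.
  rewrite all_cat; apply/andP; split; last by rewrite /= M_lt andbT; move: pow8; lia.
  apply/allP => _ /mapP [l _ ->] /=.
  by move: pow8; case: (x (inord l)) => /=; lia.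
apply/(sortedP (letter 0, 0)) => l; rewrite size_instance => lt_l.
rewrite !nth_instance; case: (ltngtP l.+1 N) => [_|lt_N_l1|_].
- by rewrite /= letter_eq //; case: (odd l).
- have -> : l = N by lia.
  by rewrite !eqxx /= eq_sym.
- by case: (odd l).
Qed.

End HardInstances.

Local Open Scope ring_scope.
Local Notation R := Rdefinitions.R.

(* The real-valued modulus: [`|z|] in [Cx] is [(modulus z)%:C]. *)
Definition modulus (z : Cx) : R := Normc.normc z.

Lemma modulusM (y z : Cx) : modulus (y * z) = modulus y * modulus z.
Proof. exact: Normc.normcM. Qed.

Lemma modulusJ (z : Cx) : modulus z^* = modulus z.
Proof. by case: z => a b; rewrite /modulus /= sqrrN. Qed.

Lemma modulus_sum (I : Type) (r : seq I) (P : pred I) (F : I -> Cx) :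
  modulus (\sum_(i <- r | P i) F i) <= \sum_(i <- r | P i) modulus (F i).
Proof.
elim/big_rec2: _ => [|i y1 y2 _ IH]; first by rewrite /modulus Normc.normc0.
by apply: le_trans (le_normcD _ _) _; rewrite lerD2l.
Qed.

Lemma mulJ_modulus (z : Cx) : z^* * z = ((modulus z ^+ 2)%:C)%C.
Proof.
case: z => a b; rewrite /modulus /= sqr_sqrtr ?addr_ge0 ?sqr_ge0 //.
by apply/eqP; rewrite eq_complex /=; apply/andP; split; apply/eqP; ring.
Qed.

Lemma sum_involution (X : finType) (V : nmodType) (pi : X -> X) (P : pred X)
    (F : X -> V) :
  involutive pi -> (forall z, P (pi z) = P z) ->
  \sum_(z | P z) F (pi z) = \sum_(z | P z) F z.
Proof.
move=> piK Ppi; rewrite [RHS](reindex_inj (inv_inj piK)) /=.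
by apply: eq_bigl => z; rewrite Ppi.
Qed.

Section Hybrid.
Variable X : finType.
Implicit Types (u v : qstate X) (pi : X -> X).

Definition dotq u v : Cx := \sum_z (u z)^* * v z.
Definition sqnorm u : R := \sum_z modulus (u z) ^+ 2.

Lemma dotqq u : dotq u u = ((sqnorm u)%:C)%C.
Proof.
by rewrite /dotq /sqnorm rmorph_sum; apply: eq_bigr => z _; rewrite mulJ_modulus.
Qed.

Lemma dotq_basis x0 : dotq (basis x0) (basis x0) = 1.
Proof.
rewrite /dotq /basis (bigD1 x0) //= big1 ?addr0 => [|z /negbTE ->].
  by rewrite eqxx conjC1 mulr1.
by rewrite mulr0.
Qed.

Lemma dotq_unitary (U : op X) u v :
  unitary U -> dotq (apply_op U u) (apply_op U v) = dotq u v.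
Proof.
move=> UU; rewrite /dotq /apply_op.
transitivity (\sum_z \sum_y \sum_w ((U z y)^* * U z w) * ((u y)^* * v w)).
  apply: eq_bigr => z _; rewrite rmorph_sum mulr_suml; apply: eq_bigr => y _.
  by rewrite mulr_sumr; apply: eq_bigr => w _; rewrite rmorphM; ring.
rewrite exchange_big /=.
transitivity (\sum_y \sum_w (\sum_z (U z y)^* * U z w) * ((u y)^* * v w)).
  apply: eq_bigr => y _; rewrite exchange_big /=.
  by apply: eq_bigr => w _; rewrite mulr_suml.
apply: eq_bigr => y _; rewrite (bigD1 y) //= UU eqxx mul1r big1 ?addr0 //.
by move=> w nyw; rewrite UU eq_sym (negbTE nyw) mul0r.
Qed.

Definition permop pi : op X := fun x y => (x == pi y)%:R.

Lemma apply_permop pi v z : involutive pi -> apply_op (permop pi) v z = v (pi z).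
Proof.
move=> piK; rewrite /apply_op /permop (bigD1 (pi z)) //= piK eqxx mul1r big1 ?addr0 //.
move=> y ypiz; case: eqP => [zpiy|]; last by rewrite mul0r.
by move: ypiz; rewrite zpiy piK eqxx.
Qed.

Lemma permop_unitary pi : involutive pi -> unitary (permop pi).
Proof.
move=> piK x y; rewrite /permop (bigD1 (pi x)) //= eqxx conjC1 mul1r.
rewrite (inj_eq (inv_inj piK)) big1 ?addr0 // => z /negbTE ->.
by rewrite conjC0 mul0r.
Qed.

Lemma modulus_dotq_le_disjoint u v (P1 P2 : pred X) :
  sqnorm u = 1 -> sqnorm v = 1 -> (forall z, P1 z -> P2 z -> False) ->
  2 / 3 <= \sum_(z | P1 z) modulus (u z) ^+ 2 ->
  2 / 3 <= \sum_(z | P2 z) modulus (v z) ^+ 2 ->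
  modulus (dotq u v) <= 19 / 20.
Proof.
move=> nu nv P12 u1 v2.
set mu := fun P => \sum_(z | P z) modulus (u z) ^+ 2.
set mv := fun P => \sum_(z | P z) modulus (v z) ^+ 2.
(* weighted AM-GM, tuned so that masses 2/3 on disjoint sets give 19/20 *)
have amgm (a c : R) : 2 * (a * c) <= 7/10 * a ^+ 2 + 10/7 * c ^+ 2.
  by have := sqr_ge0 (7 * a - 10 * c); nra.
have dot_le : modulus (dotq u v) <= \sum_z modulus (u z) * modulus (v z).
  apply: le_trans (modulus_sum _ _ _) (ler_sum _ _) => z _.
  by rewrite modulusM modulusJ.
rewrite (bigID P1) /= in dot_le.
have in_P1 : 2 * \sum_(z | P1 z) modulus (u z) * modulus (v z) <=
    7/10 * mu P1 + 10/7 * mv P1.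
  by rewrite /mu /mv !mulr_sumr -big_split /=; apply: ler_sum => z _.
have out_P1 : 2 * \sum_(z | ~~ P1 z) modulus (u z) * modulus (v z) <=
    10/7 * mu (predC P1) + 7/10 * mv (predC P1).
  rewrite /mu /mv !mulr_sumr -big_split /=; apply: ler_sum => z _.
  by have := amgm (modulus (v z)) (modulus (u z)); rewrite mulrC; lra.
have split_u : mu P1 + mu (predC P1) = 1 by move: nu; rewrite /sqnorm (bigID P1).
have split_v : mv P1 + mv (predC P1) = 1 by move: nv; rewrite /sqnorm (bigID P1).
have v2_le : mv P2 <= mv (predC P1).
  rewrite /mv [X in _ <= X](bigID P2) /=.
  have -> : \sum_(z | ~~ P1 z && P2 z) modulus (v z) ^+ 2 = mv P2.
    apply: eq_bigl => z; case P2z: (P2 z); rewrite ?andbF ?andbT //.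
    by apply/negP => /P12; apply.
  by rewrite lerDl; apply: sumr_ge0 => z _; apply: sqr_ge0.
rewrite -/(mu P1) -/(mv P2) in u1 v2; lra.
Qed.

Variable idx : X -> nat.

Definition blockwise_involution pi := involutive pi /\ forall z, idx (pi z) = idx z.

Definition block_mass j u : R := \sum_(z | idx z == j) modulus (u z) ^+ 2.

Lemma sum_block_mass_le n u : \sum_(j < n) block_mass j u <= sqnorm u.
Proof.
rewrite /block_mass (exchange_big_dep xpredT) //=; apply: ler_sum => z _.
case: (ltnP (idx z) n) => [lt_z_n|le_n_z].
  by rewrite (big_pred1 (Ordinal lt_z_n)).
rewrite big_pred0 ?sqr_ge0 // => j /=; apply/negbTE.
by rewrite neq_ltn (leq_trans (ltn_ord j) le_n_z) orbT.
Qed.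

Lemma modulus_block_dot_le pi1 pi2 j u v :
  blockwise_involution pi1 -> blockwise_involution pi2 ->
  modulus (\sum_(z | idx z == j) (u (pi1 z))^* * v (pi2 z)) <=
    (block_mass j u + block_mass j v) / 2.
Proof.
move=> [pi1K idx1] [pi2K idx2]; apply: le_trans (modulus_sum _ _ _) _.
have amgm (a c : R) : a * c <= (a ^+ 2 + c ^+ 2) / 2 by have := sqr_ge0 (a - c); nra.
apply: le_trans (_ : _ <= \sum_(z | idx z == j)
    (modulus (u (pi1 z)) ^+ 2 + modulus (v (pi2 z)) ^+ 2) / 2) _.
  by apply: ler_sum => z _; rewrite modulusM modulusJ.
rewrite -mulr_suml big_split /= /block_mass.
rewrite (sum_involution (fun z => modulus (u z) ^+ 2) pi1K) => [|z]; last by rewrite idx1.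
by rewrite (sum_involution (fun z => modulus (v z) ^+ 2) pi2K) // => z; rewrite idx2.
Qed.

Lemma modulus_dotq_permop_ge pi1 pi2 j u v :
  blockwise_involution pi1 -> blockwise_involution pi2 ->
  (forall z, idx z != j -> pi1 z = pi2 z) ->
  modulus (dotq u v) - (block_mass j u + block_mass j v) <=
    modulus (dotq (apply_op (permop pi1) u) (apply_op (permop pi2) v)).
Proof.
move=> bpi1 bpi2 pi12; have [[pi1K idx1] [pi2K _]] := (bpi1, bpi2).
set F := fun z => (u (pi1 z))^* * v (pi2 z).
set G := fun z => (u z)^* * v z.
have -> : dotq (apply_op (permop pi1) u) (apply_op (permop pi2) v) = \sum_z F z.
  by apply: eq_bigr => z _; rewrite !apply_permop.
have sumF : \sum_z F z = \sum_(z | idx z == j) F z + \sum_(z | idx z != j) G z.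
  rewrite (bigID (fun z => idx z == j)) /=; congr (_ + _).
  rewrite -(sum_involution G pi1K) => [|z]; last by rewrite idx1.
  by apply: eq_bigr => z jz; rewrite /F /G pi12.
have -> : dotq u v = \sum_z F z + \sum_(z | idx z == j) G z - \sum_(z | idx z == j) F z.
  by rewrite sumF /dotq (bigID (fun z => idx z == j)) /=; ring.
have boundF := modulus_block_dot_le j u v bpi1 bpi2.
have boundG := @modulus_block_dot_le id id j u v (conj (fun _ => erefl) (fun _ => erefl))
  (conj (fun _ => erefl) (fun _ => erefl)).
have tri1 := le_normcD (\sum_z F z + \sum_(z | idx z == j) G z)
  (- \sum_(z | idx z == j) F z).
have tri2 := le_normcD (\sum_z F z) (\sum_(z | idx z == j) G z).
rewrite normcN in tri1; rewrite /modulus /F /G /= in boundF boundG tri1 tri2 *.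
lra.
Qed.

End Hybrid.

Section QueryAlgorithm.
Variables (X : finType) (idx : X -> nat) (U : nat -> op X) (x0 : X) (T : nat).
Hypothesis U_unitary : forall t, (t <= T)%N -> unitary (U t).

Local Notation state pi t := (final_state U (permop pi) x0 t).

Lemma dotq_final_state pi1 pi2 t : (t < T)%N ->
  dotq (state pi1 t.+1) (state pi2 t.+1) =
    dotq (apply_op (permop pi1) (state pi1 t)) (apply_op (permop pi2) (state pi2 t)).
Proof. by move=> lt_t_T; rewrite dotq_unitary //; apply: U_unitary. Qed.

Lemma sqnorm_final_state pi t : involutive pi -> (t <= T)%N -> sqnorm (state pi t) = 1.
Proof.
move=> piK le_t_T; apply: (@complexI R); rewrite -dotqq.
elim: t le_t_T => [|t IH] le_t_T.
  by rewrite dotq_unitary ?dotq_basis //; apply: U_unitary.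
rewrite dotq_final_state // dotq_unitary; last exact: permop_unitary.
exact: IH (ltnW le_t_T).
Qed.

Lemma modulus_dotq_final_state_ge pi1 pi2 j t :
  blockwise_involution idx pi1 -> blockwise_involution idx pi2 ->
  (forall z, idx z != j -> pi1 z = pi2 z) -> (t <= T)%N ->
  1 - \sum_(i < t) (block_mass idx j (state pi1 i) + block_mass idx j (state pi2 i)) <=
    modulus (dotq (state pi1 t) (state pi2 t)).
Proof.
move=> bpi1 bpi2 pi12; elim: t => [|t IH] le_t_T.
  rewrite big_ord0 subr0 dotq_unitary ?dotq_basis; last exact: U_unitary.
  by rewrite /modulus Normc.normc1.
rewrite dotq_final_state // big_ord_recr /=.
have := modulus_dotq_permop_ge (state pi1 t) (state pi2 t) bpi1 bpi2 pi12.
have := IH (ltnW le_t_T); lra.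
Qed.

End QueryAlgorithm.

Section Oracle.
Variables n b m : nat.
Implicit Types (A B : seq (run b)) (z : qspace n b m).

Definition query_index z : nat := val z.1.1.1.2.

Lemma oracle_map_blockwise A B : blockwise_involution query_index (oracle_map A B).
Proof.
split=> [[[[[s i] c] r] w]|[[[[s i] c] r] w] //].
by congr (_, _, _, _); apply/ffunP => l; rewrite !ffunE -addbA addbb addbF.
Qed.

Lemma oracle_map_agree A B A' B' j z :
  (forall d i, i != j -> nth d A i = nth d A' i) ->
  (forall d i, i != j -> nth d B i = nth d B' i) ->
  query_index z != j -> oracle_map A B z = oracle_map A' B' z.
Proof.
case: z => [[[[[] i] c] r] w] AA' BB' /= ij; by rewrite /oracle_map ?AA' ?BB'.
Qed.

Lemma succeedsP T U x0 out A B : @succeeds n b m T U x0 out A B ->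
  exists2 P : pred (qspace n b m), (forall z, P z -> valid_output A B (out z)) &
    2 / 3 <= \sum_(z | P z) modulus (final_state U (permop (oracle_map A B)) x0 T z) ^+ 2.
Proof.
move=> [P [P_valid P_mass]]; exists P => //; rewrite -lecR.
have -> : ((2 / 3 : R)%:C)%C = 2%:R / 3%:R by rewrite rmorphM fmorphV /= !rmorph_nat.
by rewrite rmorph_sum (eq_bigr _ (fun z _ => rmorphXn _ _ _)).
Qed.

End Oracle.

Arguments query_index {n b m}.

Section QueryLowerBound.
Variables (b N' k m T : nat) (U : nat -> op (qspace N'.+3 b m)) (x0 : qspace N'.+3 b m).
Variable out : qspace N'.+3 b m -> nat * nat * nat.
Hypothesis b_gt2 : (2 < b)%N.
Hypothesis pad_fits : (2 * N'.+1 + 2 * k + 1 < 2 ^ b)%N.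
Hypothesis U_unitary : forall t, (t <= T)%N -> unitary (U t).
Hypothesis solves : forall A B : seq (run b),
  @valid_rle N'.+3 b A -> @valid_rle N'.+3 b B -> succeeds T U x0 out A B.
Implicit Types (x : {ffun 'I_N'.+1 -> bool}) (j : 'I_N'.+1).

Definition instance_oracle x : qspace N'.+3 b m -> qspace N'.+3 b m :=
  oracle_map (instance k (letter b 3) x) (instance k (letter b 5) x).
Definition instance_state x t := final_state U (permop (instance_oracle x)) x0 t.

Lemma instance_oracle_blockwise x : blockwise_involution query_index (instance_oracle x).
Proof. exact: oracle_map_blockwise. Qed.

Lemma sqnorm_instance_state x t : (t <= T)%N -> sqnorm (instance_state x t) = 1.
Proof.
have [oracleK _] := instance_oracle_blockwise x.
exact: (sqnorm_final_state x0 U_unitary oracleK).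
Qed.

Lemma instance_states_separated x j : crosses k x j ->
  modulus (dotq (instance_state x T) (instance_state (flip x j) T)) <= 19 / 20.
Proof.
move=> cross.
have succeeds_on y := succeedsP (solves
  (instance_valid b_gt2 pad_fits y (isT : 3%N \in [:: 3; 5]%N))
  (instance_valid b_gt2 pad_fits y (isT : 5%N \in [:: 3; 5]%N))).
have [P1 P1_valid P1_mass] := succeeds_on x.
have [P2 P2_valid P2_mass] := succeeds_on (flip x j).
apply: (modulus_dotq_le_disjoint (sqnorm_instance_state _ (leqnn T))
  (sqnorm_instance_state _ (leqnn T)) _ P1_mass P2_mass).
move=> z /P1_valid/(valid_output_threshold b_gt2) ans_x.
move=> /P2_valid/(valid_output_threshold b_gt2) ans_y.
by move: cross; rewrite /crosses !ltnNge -ans_x -ans_y eqxx.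
Qed.

Lemma crossing_query_mass x j : crosses k x j ->
  1 / 20 <= \sum_(t < T) (block_mass query_index j (instance_state x t)
                         + block_mass query_index j (instance_state (flip x j) t)).
Proof.
move=> cross; have := instance_states_separated cross.
have oracles_agree z : query_index z != j ->
    instance_oracle x z = instance_oracle (flip x j) z.
  by move=> zj; apply: oracle_map_agree zj => d i ij; rewrite nth_instance_flip.
have := modulus_dotq_final_state_ge x0 U_unitary (instance_oracle_blockwise x)
  (instance_oracle_blockwise (flip x j)) oracles_agree (leqnn T).
rewrite /instance_state; lra.
Qed.

Lemma hard_instances_query_bound : (2 * k < N'.+1)%N -> (k.+1 <= 40 * T)%N.
Proof.
move=> two_k_lt_N; rewrite -(ler_nat R) natrM.
suff : k.+1%:R * (1 / 20) <= 2 * T%:R :> R by lra.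
apply: (threshold_query_bound
  (q := fun x j t => block_mass query_index j (instance_state x t)) two_k_lt_N).
- lra.
- by move=> x j t; apply: sumr_ge0 => z _; apply: sqr_ge0.
- move=> x t lt_t_T; rewrite -(sqnorm_instance_state x (ltnW lt_t_T)).
  exact: sum_block_mass_le.
- exact: crossing_query_mass.
Qed.

End QueryLowerBound.

Theorem corollary2 :
  exists c k K n0 : nat,
  forall (n b m T : nat)
         (U : nat -> op (qspace n b m)) (x0 : qspace n b m)
         (out : qspace n b m -> nat * nat * nat),
    (n0 <= n)%N ->
    (K * (trunc_log 2 n).+1 <= b)%N ->
    (forall t, (t <= T)%N -> unitary (U t)) ->
    (forall A B : seq (run b), @valid_rle n b A -> @valid_rle n b B ->
       @succeeds n b m T U x0 out A B) ->
    (n <= c * T * (trunc_log 2 n).+1 ^ k)%N.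
Proof.
exists 82%N, 0%N, 3%N, 3%N => n b m T U x0 out n_ge3 b_ge U_unitary solves.
have [N' n_eq] : exists N', n = N'.+3 by exists (n - 3)%N; lia.
subst n; rewrite expn0 muln1.
have cube_lt : (N'.+3 ^ 3 < 2 ^ b)%N.
  by apply: leq_trans (expn_lt_trunc_log _ (isT : 0 < 3)%N) _; rewrite leq_exp2l.
have : ((N' %/ 2).+1 <= 40 * T)%N.
  apply: (@hard_instances_query_bound b N' (N' %/ 2) m T U x0 out) => //; [lia | | lia].
  by move: cube_lt; rewrite !expnS expn0 muln1; nia.
lia.
Qed.
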